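(* Consider Setting A and suppose $\{\mathcal G[k]\}_{k\ge0}$ satisfies conditions (C1), (C2), (C3). Then there exist observer gains $L_1,\dots,L_N$ and a time $K\in\mathbb N$ such that, when all nodes run Algorithm 1, for every initial state $x[0]$ and all initial estimates, $\hat x_i[k]=x[k]$ for all $k\ge K$ and all $i\in\mathcal V$ (where $\hat x_i[k]=T\hat z_i[k]$).
   Context: Setting A. Consider the discrete-time LTI system $x[k+1]=Ax[k]$, $k\in\mathbb N$, with $A\in\mathbb R^{n\times n}$, monitored by $N$ nodes $\mathcal V=\{1,\dots,N\}$; node $i$ measures $y_i[k]=C_ix[k]$ with $C_i\in\mathbb R^{r_i\times n}$. Let $C=[C_1^T\ \cdots\ C_N^T]^T$ and assume $(A,C)$ is observable. Fix an invertible $T$ such that $\bar A=T^{-1}AT$ is block lower-triangular with diagonal blocks $A_{11},\dots,A_{NN}$ and off-diagonal blocks $A_{jq}$ ($q<j$), zero blocks above the diagonal, and $C_iT=[C_{i1}\ \cdots\ C_{ii}\ 0\ \cdots\ 0]$ for each $i$, with $(A_{jj},C_{jj})$ observable for every $j$ (such $T$ exists). With $z[k]=T^{-1}x[k]$ partitioned compatibly into sub-states $z^{(1)}[k],\dots,z^{(N)}[k]$, one has $z^{(j)}[k+1]=A_{jj}z^{(j)}[k]+\sum_{q=1}^{j-1}A_{jq}z^{(q)}[k]$ and $y_j[k]=\sum_{q=1}^{j}C_{jq}z^{(q)}[k]$. Node $j$ is called the source node of sub-state $j$. Communication: at each time $k$ there is a directed graph $\mathcal G[k]=(\mathcal V,\mathcal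 E[k])$; $(l,i)\in\mathcal E[k]$ means $l$ can send to $i$ at time $k$; $\mathcal N_i[k]=\{l\neq i:(l,i)\in\mathcal E[k]\}$. The union graph over $[k_1,k_2]$ has vertex set $\mathcal V$ and edge set $\bigcup_{\tau=k_1}^{k_2}\mathcal E[\tau]$. Algorithm 1 (run for every sub-state $j$ simultaneously). Each node $i$ keeps an estimate $\hat z^{(j)}_i[k]$ (arbitrary initial value) and a freshness index $\tau^{(j)}_i[k]\in\mathbb N\cup\{\omega\}$, where $\omega$ is a special symbol; initially $\tau^{(j)}_j[0]=0$ and $\tau^{(j)}_i[0]=\omega$ for $i\ne j$. Source node $j$: $\tau^{(j)}_j[k]=0$ for all $k$, and $\hat z^{(j)}_j[k+1]=(A_{jj}-L_jC_{jj})\hat z^{(j)}_j[k]+\sum_{q=1}^{j-1}(A_{jq}-L_jC_{jq})\hat z^{(q)}_j[k]+L_jy_j[k]$, where $L_j$ is an observer gain. Non-source node $i\neq j$ at time $k$: let $\mathcal M^{(j)}_i[k]=\{l\in\mathcal N_i[k]:\tau^{(j)}_l[k]\neq\omega\}$; if $\tau^{(j)}_i[k]=\omega$ let $\mathcal F^{(j)}_i[k]=\mathcal M^{(j)}_i[k]$, otherwise $\mathcal F^{(j)}_i[k]=\{l\in\mathcal M^{(j)}_i[k]:\tau^{(j)}_l[k]<\tau^{(j)}_i[k]\}$. If $\mathcal F^{(j)}_i[k]\ne\emptyset$, pick $u\in\arg\min_{l\in\mathcal F^{(j)}_i[k]}\tau^{(j)}_l[k]$ and set $\tau^{(j)}_i[k+1]=\tau^{(j)}_u[k]+1$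 and $\hat z^{(j)}_i[k+1]=A_{jj}\hat z^{(j)}_u[k]+\sum_{q=1}^{j-1}A_{jq}\hat z^{(q)}_i[k]$ (''$i$ adopts the information of $u$ at time $k$''). If $\mathcal F^{(j)}_i[k]=\emptyset$, set $\tau^{(j)}_i[k+1]=\omega$ if $\tau^{(j)}_i[k]=\omega$ and $\tau^{(j)}_i[k+1]=\tau^{(j)}_i[k]+1$ otherwise, and $\hat z^{(j)}_i[k+1]=A_{jj}\hat z^{(j)}_i[k]+\sum_{q=1}^{j-1}A_{jq}\hat z^{(q)}_i[k]$ (''$i$ adopts its own information''). Conditions on the graph sequence: there is an increasing sequence $\mathbb I=\{t_0,t_1,\dots\}\subset\mathbb N$ with $t_0=0$ such that, with $f(t_q)=t_{q+1}-t_q$: (C1) $f(t_q)$ is non-decreasing in $q$; (C2) with $m(k)=\max\{t_q\in\mathbb I:t_q\le k\}$ and $g(k)=f(m(k))$, one has $\limsup_{k\to\infty}\frac{2(N-1)g(k)}{k}=\delta<1$; (C3) for each $q$, the union graph over $[t_q,t_{q+1}-1]$ is strongly connected. *)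

From HB Require Import structures.
From mathcomp Require Import all_boot all_order all_algebra.
Set Implicit Arguments.
Unset Strict Implicit.
Unset Printing Implicit Defensive.
Import Order.TTheory GRing.Theory Num.Theory.

(* Union graph over [k1, k2]: edge (a,b) present iff it is present at some
   time tau with k1 <= tau <= k2.  E k l i means "l can send to i at time k". *)
Definition union_rel (N : nat) (E : nat -> rel 'I_N) (k1 k2 : nat) : rel 'I_N :=
  fun a b => has (fun s => E s a b) (index_iota k1 k2.+1).

Definition strongly_connected (N : nat) (e : rel 'I_N) : Prop :=
  forall a b : 'I_N, connect e a b.

(* index q of m(k) = max { t_q in I : t_q <= k } *)
Definition idx (t : nat -> nat) (k : nat) : nat := \max_(q < k.+1 | t q <= k) q.

(* g(k) = f(m(k)) with f(t_q) = t_{q+1} - t_q *)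
Definition gfun (t : nat -> nat) (k : nat) : nat := t (idx t k).+1 - t (idx t k).

(* I = {t_0 < t_1 < ...}, t_0 = 0, and conditions (C1), (C2), (C3).
   (C2) "limsup 2(N-1)g(k)/k = delta < 1" is stated as: there is a rational
   a/b < 1 bounding the ratio for all large k (equivalent to limsup < 1). *)
Definition graph_conditions (N : nat) (E : nat -> rel 'I_N) (t : nat -> nat) : Prop :=
  [/\ t 0 = 0,
      (forall q, t q < t q.+1),
      (forall q, t q.+1 - t q <= t q.+2 - t q.+1),
      (exists a b k0 : nat, a < b /\
          forall k, k0 <= k -> b * (2 * (N - 1) * gfun t k) <= a * k)
    & (forall q, strongly_connected (union_rel E (t q) (t q.+1).-1))].

(* ---------- freshness indices: None encodes omega *)
Definition fresh_lt (a b : option nat) : bool :=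
  match a, b with Some x, Some y => x < y | _, _ => false end.
Definition fresh_le (a b : option nat) : bool :=
  match a, b with Some x, Some y => x <= y | _, _ => false end.

Definition in_F (N : nat) (E : nat -> rel 'I_N)
    (tau : 'I_N -> 'I_N -> nat -> option nat) (i j : 'I_N) (k : nat) (l : 'I_N) : bool :=
  [&& l != i, E k l i, tau l j k != None &
      (if tau i j k is Some _ then fresh_lt (tau l j k) (tau i j k) else true)].

Local Open Scope ring_scope.

Definition observable (R : fieldType) (n p : nat)
    (A : 'M[R]_n) (C : 'M[R]_(p, n)) : bool :=
  \rank (\mxcol_(i < n) (C *m A ^+ i)) == n.

(* (zh, tau) is a run of Algorithm 1 (all sub-states j simultaneously), with
   true state x[k] = A^k x0, measurements y_j[k] = C_j x[k], gains L,
   graph sequence E.  zh i j k = \hat z^{(j)}_i[k]; tau i j k = tau^{(j)}_i[k].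
   Initial estimates zh _ _ 0 are unconstrained; ties in the argmin are
   resolved arbitrarily. *)
Definition run (R : realFieldType) (N : nat) (d r : 'I_N -> nat)
    (Ab : forall j q : 'I_N, 'M[R]_(d j, d q))
    (Cb : forall i q : 'I_N, 'M[R]_(r i, d q))
    (Cs : forall i : 'I_N, 'M[R]_(r i, \sum_(j < N) d j))
    (A : 'M[R]_(\sum_(j < N) d j))
    (L : forall j : 'I_N, 'M[R]_(d j, r j))
    (E : nat -> rel 'I_N)
    (x0 : 'cV[R]_(\sum_(j < N) d j))
    (zh : forall i j : 'I_N, nat -> 'cV[R]_(d j))
    (tau : 'I_N -> 'I_N -> nat -> option nat) : Prop :=
  [/\ (forall i j : 'I_N, i != j -> tau i j 0 = None),
      (forall (j : 'I_N) k, tau j j k = Some 0%N),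
      (forall (j : 'I_N) k,
          zh j j k.+1 =
            (Ab j j - L j *m Cb j j) *m zh j j k
            + \sum_(q < N | (q < j)%N) ((Ab j q - L j *m Cb j q) *m zh j q k)
            + L j *m (Cs j *m (A ^+ k *m x0)))
    & (forall (i j : 'I_N) k, i != j ->
         ((exists l, in_F E tau i j k l) ->
            exists u, [/\ in_F E tau i j k u,
                          (forall l, in_F E tau i j k l -> fresh_le (tau u j k) (tau l j k)),
                          tau i j k.+1 = omap S (tau u j k)
                        & zh i j k.+1 = Ab j j *m zh u j k
                            + \sum_(q < N | (q < j)%N) (Ab j q *m zh i q k)])
         /\
         ((forall l, ~~ in_F E tau i j k l) ->
            tau i j k.+1 = omap S (tau i j k) /\
            zh i j k.+1 = Ab j j *m zh i j k
                            + \sum_(q < N | (q < j)%N) (Ab j q *m zh i q k)))].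

(* Each source j runs a deadbeat observer for its own diagonal block: by
   observability of (A_jj, C_jj) there is a gain with (A_jj - L_j C_jj)^(d_j) = 0,
   so once the sub-states q < j are exact at every node, the source's error on
   sub-state j vanishes d_j steps later.  A relay step of Algorithm 1 applies the
   true dynamics to the relayed estimate, so an estimate whose freshness index
   shows that it left the source after that moment is exact.  On each interval
   whose union graph is strongly connected, some edge leaves the set of nodes
   holding such fresh information, so this set grows strictly until it is all of
   V; after N - 1 intervals every node is exact on sub-state j.  Only (C3) is needed: (C1) and (C2) merely bound the size of K, and
   observability of (A, C) only guarantees that a suitable T exists. *)

From HB Require Import structures.
From mathcomp Require Import all_boot all_order all_algebra.
From mathcomp Require Import zify.
Set Implicit Arguments. Unset Strict Implicit. Unset Printing Implicit Defensive.
Import Order.TTheory GRing.Theory Num.Theory.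
Local Open Scope ring_scope.

Section Deadbeat.
Variables (F : fieldType) (n p : nat) (A : 'M[F]_n) (C : 'M[F]_(p, n)).

Definition obs_span k : 'M[F]_n := (\sum_(i < k) <<C *m A ^+ i>>)%MS.

Definition obs_level k : 'M[F]_n := kermx (A ^+ k *m cokermx (obs_span k)).

Lemma sub_obs_level k m (v : 'M_(m, n)) :
  (v <= obs_level k)%MS = (v *m A ^+ k <= obs_span k)%MS.
Proof. by rewrite sub_kermx submxE mulmxA. Qed.

Lemma obs_span0 : obs_span 0 = 0.
Proof. by rewrite /obs_span big_ord0. Qed.

Lemma obs_spanS k : obs_span k.+1 = (obs_span k + <<C *m A ^+ k>>)%MS.
Proof. by rewrite /obs_span big_ord_recr. Qed.

Lemma obs_level0 m (v : 'M_(m, n)) : (v <= obs_level 0)%MS -> v = 0.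
Proof. by rewrite sub_obs_level obs_span0 expr0 mulmx1 submx0 => /eqP. Qed.

Lemma obs_spanMA k : (obs_span k *m A <= obs_span k.+1)%MS.
Proof.
elim: k => [|k IH]; first by rewrite obs_span0 mul0mx sub0mx.
rewrite obs_spanS addsmxMr addsmx_sub; apply/andP; split.
  by apply: submx_trans IH _; rewrite [obs_span k.+2]obs_spanS addsmxSl.
rewrite (eqmxMr _ (genmxE _)) obs_spanS -mulmxA mulmxE -exprSr.
by apply: submx_trans (addsmxSr _ _); rewrite genmxE.
Qed.

Lemma obs_levelS k : (obs_level k <= obs_level k.+1)%MS.
Proof.
rewrite sub_obs_level exprSr -mulmxE mulmxA.
by apply: submx_trans (obs_spanMA k); apply: submxMr; rewrite -sub_obs_level.
Qed.

Lemma obs_level_monotone j k : (j <= k)%N -> (obs_level j <= obs_level k)%MS.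
Proof.
move=> /subnK <-; elim: (k - j)%N => [|m IH] //=.
by rewrite addSn (submx_trans IH) // obs_levelS.
Qed.

Lemma obs_levelSMA k (v : 'rV_n) :
  (v <= obs_level k.+1)%MS -> (v *m A <= obs_level k + C)%MS.
Proof.
rewrite sub_obs_level obs_spanS => /sub_addsmxP [[u1 u2] /= vAk].
have /submxP [w u2w] : (u2 *m <<C *m A ^+ k>> <= C *m A ^+ k)%MS.
  by apply: submx_trans (submxMl _ _) _; rewrite genmxE.
have HvC : (v *m A - w *m C <= obs_level k)%MS.
  have AAk : A *m A ^+ k = A ^+ k.+1 by rewrite exprS mulmxE.
  by rewrite sub_obs_level mulmxBl -!mulmxA AAk vAk u2w addrK submxMl.
by rewrite -[v *m A](subrK (w *m C)) addmx_sub_adds // submxMl.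
Qed.

Lemma obs_level_full : observable A C -> (1%:M <= obs_level n)%MS.
Proof.
move=> /eqP rankO; rewrite sub_obs_level mul1mx (submx_trans (submx1 _)) //.
rewrite sub1mx /row_full eqn_leq rank_leq_col -{1}rankO mxrankS //; apply/row_subP => s.
rewrite row_mxcol; apply: submx_trans (row_sub _ _) _.
by apply: (sumsmx_sup (tagnat.sig1 s)) => //; rewrite genmxE.
Qed.

(* Since [obs_level 0 = 0] and, by observability, [obs_level n] is the whole
   space, [(A - L C)^n = 0] as soon as [L] lowers every level by one. *)
Definition lowers_levels (L : 'M[F]_(n, p)) k := forall j, (j <= k)%N ->
  forall v : 'rV_n, (v <= obs_level j)%MS -> (v *m (A - L *m C) <= obs_level j.-1)%MS.

Lemma sub_col_mx_correction m (V : 'M[F]_(m, n)) (u : 'rV_n) (M : 'M[F]_n) :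
  (u *m M <= col_mx V C)%MS ->
  (u *m M - u *m (M *m pinvmx (col_mx V C) *m col_mx 0 1%:M) *m C <= V)%MS.
Proof.
move=> /mulmxKpV; set c := _ *m pinvmx _ => Hc.
rewrite !(mulmxA u) -/c -{1}Hc -[c]hsubmxK !mul_row_col.
by rewrite mulmx0 add0r mulmx1 addrK submxMl.
Qed.

Lemma lowers_levelsS L k : lowers_levels L k -> exists L', lowers_levels L' k.+1.
Proof.
(* The correction [(1 - Q) G] vanishes on [obs_level k], so lower levels are
   unaffected, and on a complement it cancels the [C]-component of the image. *)
move=> lowL; set V := obs_level k; set Q := proj_mx V V^C%MS.
set G := (A - L *m C) *m pinvmx (col_mx V C) *m col_mx 0 1%:M.
have QVC (v : 'rV_n) : (v *m Q <= V)%MS by apply: proj_mx_sub.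
have QV (v : 'rV_n) : (v <= V)%MS -> v *m Q = v.
  by move=> vV; rewrite proj_mx_id ?capmx_compl.
exists (L + (1%:M - Q) *m G) => j; rewrite leq_eqVlt ltnS.
have -> : A - (L + (1%:M - Q) *m G) *m C = A - L *m C - (1%:M - Q) *m (G *m C).
  by rewrite (mulmxDl L) mulmxA opprD addrA.
case/orP=> [/eqP -> | lt_jk] v vj /=; last first.
  have vV : (v <= V)%MS by apply: submx_trans vj (obs_level_monotone lt_jk).
  rewrite (mulmxBr v (A - L *m C)) (mulmxA v) (mulmxBr v 1%:M) mulmx1 QV //.
  by rewrite subrr mul0mx subr0 lowL.
set u := v - v *m Q.
have uS : (u <= obs_level k.+1)%MS.
  by rewrite addmx_sub // eqmx_opp (submx_trans (QVC v)) ?obs_levelS.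
have uC : (u *m (A - L *m C) <= col_mx V C)%MS.
  rewrite -addsmxE mulmxBr addmx_sub ?obs_levelSMA //.
  by rewrite eqmx_opp mulmxA (submx_trans (submxMl _ _)) ?addsmxSr.
have -> : v *m (A - L *m C - (1%:M - Q) *m (G *m C)) =
    (u *m (A - L *m C) - u *m G *m C) + v *m Q *m (A - L *m C).
  have vQ : v *m (1%:M - Q) = u by rewrite mulmxBr mulmx1.
  rewrite (mulmxBr v) (mulmxA v (1%:M - Q)) vQ (mulmxA u) addrAC.
  by rewrite -mulmxDl subrK.
rewrite addmx_sub ?sub_col_mx_correction //.
apply: submx_trans (lowL k (leqnn k) _ (QVC v)) _.
exact: obs_level_monotone (leq_pred k).
Qed.

Lemma deadbeat_gain : observable A C -> exists L : 'M[F]_(n, p), (A - L *m C) ^+ n = 0.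
Proof.
move=> obsAC; have gain_for k : exists L, lowers_levels L k.
  elim: k => [|k [L /lowers_levelsS //]].
  by exists 0 => j; rewrite leqn0 => /eqP -> v /obs_level0 ->; rewrite mul0mx sub0mx.
have [L lowL] := gain_for n; exists L.
have nil_level m : (m <= n)%N -> forall v : 'rV_n,
    (v <= obs_level m)%MS -> v *m (A - L *m C) ^+ m = 0.
  elim: m => [|m IH] le_mn v vm; first by rewrite (obs_level0 vm) mul0mx.
  rewrite exprS -mulmxE mulmxA; apply: IH; [exact: ltnW | exact: (lowL m.+1 le_mn v vm)].
apply/row_matrixP => i; rewrite row0 -[X in row i X]mul1mx row_mul.
by apply: nil_level => //; apply: submx_trans (row_sub _ _) (obs_level_full obsAC).
Qed.

End Deadbeat.

Lemma connect_exit (T : finType) (e : rel T) (P : pred T) x y :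
  connect e x y -> P x -> ~~ P y -> exists a b, [/\ e a b, P a & ~~ P b].
Proof.
case/connectP => p; elim: p x => [|z p IH] x /=; first by move=> _ -> ->.
move=> /andP [exz pz] Hy Px; case: (boolP (P z)) => Pz; first exact: IH pz Hy Pz.
by exists x, z.
Qed.

Lemma incr_geq_id (t : nat -> nat) : (forall q, t q < t q.+1)%N -> forall q, (q <= t q)%N.
Proof. by move=> t_incr; elim=> [|q IH] //; apply: leq_ltn_trans IH (t_incr q). Qed.

Lemma sum_lower_triangular (V : nmodType) (N : nat) (F : 'I_N -> V) (j : 'I_N) :
  (forall q : 'I_N, (j < q)%N -> F q = 0) ->
  \sum_(q < N) F q = F j + \sum_(q < N | (q < j)%N) F q.
Proof.
move=> F0; rewrite (bigD1 j) //=; congr (_ + _).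
rewrite (bigID (fun q : 'I_N => (q < j)%N)) /= [X in _ + X]big1 ?addr0; last first.
  move=> q /andP [qj]; rewrite -leqNgt leq_eqVlt => /orP [/eqP/ord_inj jq | /F0 //].
  by rewrite jq eqxx in qj.
apply: eq_bigl => q; rewrite andb_idl // => lt_qj.
by apply: contraTneq lt_qj => ->; rewrite ltnn.
Qed.

Section Run.
Variables (R : realFieldType) (N : nat) (d r : 'I_N -> nat)
  (Ab : forall j q : 'I_N, 'M[R]_(d j, d q)) (Cb : forall i q : 'I_N, 'M[R]_(r i, d q))
  (Cs : forall i : 'I_N, 'M[R]_(r i, \sum_(j < N) d j)) (A : 'M[R]_(\sum_(j < N) d j))
  (L : forall j : 'I_N, 'M[R]_(d j, r j)) (E : nat -> rel 'I_N)
  (x0 : 'cV[R]_(\sum_(j < N) d j)) (zh : forall i j : 'I_N, nat -> 'cV[R]_(d j))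
  (tau : 'I_N -> 'I_N -> nat -> option nat).
Hypothesis run_alg : run Ab Cb Cs A L E x0 zh tau.

Lemma tau_source j k : tau j j k = Some 0%N.
Proof. by case: run_alg. Qed.

(* The two branches of the non-source update, where adopting its own
   information means taking [u = i]. *)
Lemma run_adopt i j k : i != j ->
  exists2 u, u = i \/ in_F E tau i j k u &
    [/\ forall l, in_F E tau i j k l -> fresh_le (tau u j k) (tau l j k),
        tau i j k.+1 = omap S (tau u j k)
      & zh i j k.+1 = Ab j j *m zh u j k + \sum_(q < N | (q < j)%N) (Ab j q *m zh i q k)].
Proof.
case: run_alg => _ _ _ step ij; have [adopt own] := step i j k ij.
case: (boolP [exists l, in_F E tau i j k l]) => [/existsP F_ne | /existsPn F0].
  by have [u [Fu minu tauS zhS]] := adopt F_ne; exists u; [right | split].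
have [tauS zhS] := own F0; exists i; [by left | split => // l].
by rewrite (negbTE (F0 l)).
Qed.

(* Node [i] holds at time [k] an estimate of sub-state [j] that left its
   source at a time [>= X]. *)
Definition informed j i k X : bool :=
  if tau i j k is Some s then (X + s <= k)%N else false.

Lemma informed_source j k X : (X <= k)%N -> informed j j k X.
Proof. by rewrite /informed tau_source addn0. Qed.

Lemma informed_succ j i k X : informed j i k X -> informed j i k.+1 X.
Proof.
rewrite /informed; case: (eqVneq i j) => [-> | ij].
  by rewrite !tau_source addn0 => /leqW.
case ti: (tau i j k) => [s|] // Xs.
have [u [-> | Fu] [_ -> _]] := run_adopt k ij; first by rewrite ti /= addnS ltnS.
move: Fu; rewrite /in_F ti => /and4P [_ _ _]; case: (tau u j k) => [su|] //= lt_su.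
by rewrite addnS ltnS (leq_trans _ Xs) // leq_add2l ltnW.
Qed.

Lemma informed_monotone j i k k' X :
  (k <= k')%N -> informed j i k X -> informed j i k' X.
Proof.
move=> /subnK <-; elim: (k' - k)%N => [|m IH] //= ik.
by rewrite addSn informed_succ ?IH.
Qed.

Lemma informed_spread j a b k X :
  a != b -> E k a b -> informed j a k X -> informed j b k.+1 X.
Proof.
move=> ab Eab ia; case: (boolP (informed j b k X)) => [/informed_succ // | ib].
move: ia ib; rewrite /informed; case ta: (tau a j k) => [sa|] // Xsa.
case: (eqVneq b j) => [-> | bj].
  by rewrite !tau_source addn0 => _; apply: leq_trans (leq_addr sa X) (leqW Xsa).
move=> Xsb; have Fa : in_F E tau b j k a.
  rewrite /in_F ab Eab ta /=; move: Xsb; case: (tau b j k) => [sb|] //=.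
  by rewrite -ltnNge => k_lt; rewrite -(ltn_add2l X); apply: leq_ltn_trans Xsa k_lt.
have [u _ [/(_ a Fa) minu -> _]] := run_adopt k bj.
move: minu; rewrite ta; case: (tau u j k) => [su|] //= le_su.
by rewrite addnS ltnS (leq_trans _ Xsa) // leq_add2l.
Qed.

Definition informed_set j k X := [set i | informed j i k X].

Section Intervals.
Variables (t : nat -> nat) (j : 'I_N) (X : nat).
Hypothesis t_incr : forall q, (t q < t q.+1)%N.
Hypothesis t_connected : forall q, strongly_connected (union_rel E (t q) (t q.+1).-1).

Lemma informed_set_monotone k k' :
  (k <= k')%N -> informed_set j k X \subset informed_set j k' X.
Proof. by move=> kk'; apply/subsetP => i; rewrite !inE; apply: informed_monotone. Qed.

(* Along a path from the source to an uninformed node, some union-graph edge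
   leaves the informed set; it is used inside the interval and informs its head. *)
Lemma informed_set_interval q : (X <= t q)%N ->
  informed_set j (t q) X = setT \/
  (#|informed_set j (t q) X| < #|informed_set j (t q.+1) X|)%N.
Proof.
move=> Xt; have [/forallP all_inf | /forallPn [b bS]] :=
  boolP [forall b, b \in informed_set j (t q) X].
  by left; apply/setP => b; rewrite [RHS]inE all_inf.
right; apply: proper_card; apply/properP; split.
  by apply: informed_set_monotone; apply: ltnW.
rewrite inE in bS; have jS : informed j j (t q) X by rewrite informed_source.
have [a [b' [Eab ia ib']]] :=
  connect_exit (P := fun i => informed j i (t q) X) (t_connected q j b) jS bS.
exists b'; last by rewrite inE.
move: Eab => /hasP [s]; rewrite mem_index_iota => /andP [s_ge s_lt] Es.
have ab' : a != b' by apply: contraNneq ib' => <-.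
rewrite inE (@informed_monotone _ _ s.+1) //; last first.
  by apply: informed_spread ab' Es (informed_monotone s_ge ia).
by move: s_lt; rewrite prednK // (leq_ltn_trans (leq0n _) (t_incr q)).
Qed.

Lemma informed_set_grow q : (X <= t q)%N ->
  forall m, (minn N m.+1 <= #|informed_set j (t (q + m)) X|)%N.
Proof.
move=> Xt; elim=> [|m IH].
  rewrite addn0 (leq_trans (geq_minr _ _)) // card_gt0; apply/set0Pn.
  by exists j; rewrite inE informed_source.
have Xtm : (X <= t (q + m))%N.
  apply: leq_trans Xt (homo_leq leqnn leq_trans _ (leq_addr _ _)).
  by move=> q'; apply: ltnW.
rewrite addnS; case: (informed_set_interval Xtm) => [full | grows]; last first.
  by apply: leq_trans grows; move: IH; move: #|_| => c; lia.
have /subset_leq_card :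
    informed_set j (t (q + m)) X \subset informed_set j (t (q + m).+1) X.
  by apply: informed_set_monotone; apply: ltnW.
by rewrite full cardsT card_ord; apply: leq_trans (geq_minl _ _).
Qed.

Lemma informed_all q : (X <= t q)%N ->
  forall k i, (t (q + N.-1) <= k)%N -> informed j i k X.
Proof.
move=> Xt k i tk; have N_gt0 : (0 < N)%N by case: N j {i} => [[]|].
have := informed_set_grow Xt N.-1; rewrite prednK // minnn => Ncard.
have full : informed_set j (t (q + N.-1)) X = setT.
  by apply/eqP; rewrite eqEcard subsetT cardsT card_ord Ncard.
have : i \in informed_set j (t (q + N.-1)) X by rewrite full inE.
by rewrite inE; apply: informed_monotone.
Qed.

End Intervals.

Variable T : 'M[R]_(\sum_(j < N) d j).
Hypothesis T_unit : T \in unitmx.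
Hypothesis A_block : invmx T *m A *m T = \mxblock_(j < N, q < N) Ab j q.
Hypothesis Ab_lower : forall j q : 'I_N, (j < q)%N -> Ab j q = 0.
Hypothesis Cs_block : forall i : 'I_N, Cs i *m T = \mxrow_(q < N) Cb i q.
Hypothesis Cb_lower : forall i q : 'I_N, (i < q)%N -> Cb i q = 0.

Definition zstate k := invmx T *m (A ^+ k *m x0).
Definition zsub (q : 'I_N) k : 'cV[R]_(d q) := submxcol (zstate k) q.

Lemma zstate_mxcol k : zstate k = \mxcol_q zsub q k.
Proof. by rewrite submxcolK. Qed.

Lemma T_zstate k : T *m zstate k = A ^+ k *m x0.
Proof. by rewrite /zstate mulKVmx. Qed.

Lemma zsubS j k :
  zsub j k.+1 = Ab j j *m zsub j k + \sum_(q < N | (q < j)%N) (Ab j q *m zsub q k).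
Proof.
rewrite [LHS]/zsub; have -> : zstate k.+1 = (invmx T *m A *m T) *m zstate k.
  by rewrite -!mulmxA T_zstate /zstate exprS -mulmxE !mulmxA.
rewrite A_block zstate_mxcol mul_mxblock_mxrow mxcolK.
by apply: sum_lower_triangular => q jq; rewrite Ab_lower // mul0mx.
Qed.

Lemma output_zsub j k :
  Cs j *m (A ^+ k *m x0) = Cb j j *m zsub j k + \sum_(q < N | (q < j)%N) (Cb j q *m zsub q k).
Proof.
rewrite -T_zstate mulmxA Cs_block zstate_mxcol mul_mxrow_mxcol.
by apply: sum_lower_triangular => q jq; rewrite Cb_lower // mul0mx.
Qed.

Lemma zsub_observer j k :
  zsub j k.+1 = (Ab j j - L j *m Cb j j) *m zsub j k
    + \sum_(q < N | (q < j)%N) ((Ab j q - L j *m Cb j q) *m zsub q k)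
    + L j *m (Cs j *m (A ^+ k *m x0)).
Proof.
have sumB : \sum_(q < N | (q < j)%N) ((Ab j q - L j *m Cb j q) *m zsub q k) =
    \sum_(q < N | (q < j)%N) (Ab j q *m zsub q k)
    - \sum_(q < N | (q < j)%N) (L j *m (Cb j q *m zsub q k)).
  by rewrite -sumrB; apply: eq_bigr => q _; rewrite mulmxBl mulmxA.
rewrite output_zsub zsubS mulmxDr mulmx_sumr sumB mulmxBl -mulmxA.
by rewrite -addrACA !subrK.
Qed.

Definition exact_below (m K : nat) :=
  forall q : 'I_N, (q < m)%N -> forall i k, (K <= k)%N -> zh i q k = zsub q k.

Lemma exact_below_monotone m K K' : (K <= K')%N -> exact_below m K -> exact_below m K'.
Proof. by move=> KK' ex q qm i k K'k; apply: ex => //; apply: leq_trans K'k. Qed.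

Lemma source_errorS (j : 'I_N) K k : exact_below j K -> (K <= k)%N ->
  zh j j k.+1 - zsub j k.+1 = (Ab j j - L j *m Cb j j) *m (zh j j k - zsub j k).
Proof.
move=> ex Kk; case: run_alg => _ _ src _; rewrite src zsub_observer.
rewrite (eq_bigr (fun q => (Ab j q - L j *m Cb j q) *m zsub q k)); last first.
  by move=> q jq; rewrite (ex q jq j k Kk).
by rewrite opprD addrACA subrr addr0 opprD addrACA subrr addr0 mulmxBr.
Qed.

Hypothesis gain_nilpotent : forall j, (Ab j j - L j *m Cb j j) ^+ d j = 0.

Lemma source_exact (j : 'I_N) K : exact_below j K ->
  forall k, (K + d j <= k)%N -> zh j j k = zsub j k.
Proof.
move=> ex; have err s : zh j j (K + s) - zsub j (K + s) =
    (Ab j j - L j *m Cb j j) ^+ s *m (zh j j K - zsub j K).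
  elim: s => [|s IH]; first by rewrite addn0 expr0 mul1mx.
  by rewrite addnS (source_errorS ex (leq_addr _ _)) IH mulmxA exprS mulmxE.
move=> k /subnK <-; apply/eqP; rewrite -subr_eq0 addnC -addnA err exprD.
by rewrite gain_nilpotent mul0r mul0mx.
Qed.

(* Fresh enough information is exact, because every relay step applies the
   true dynamics to an exact estimate. *)
Lemma informed_exact (j : 'I_N) K : exact_below j K ->
  (forall k, (K <= k)%N -> zh j j k = zsub j k) ->
  forall k i, informed j i k K -> zh i j k = zsub j k.
Proof.
move=> ex src_ex; elim=> [|k IH] i; case: (eqVneq i j) => [-> | ij].
- by rewrite /informed tau_source addn0; apply: src_ex.
- by case: run_alg => init _ _ _; rewrite /informed init.
- by rewrite /informed tau_source addn0; apply: src_ex.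
have [u _ [_ tauS ->]] := run_adopt k ij; rewrite /informed tauS.
case tu: (tau u j k) => [s|] //= Ks; have Kk : (K <= k)%N by lia.
rewrite zsubS IH; last by rewrite /informed tu; lia.
by congr (_ + _); apply: eq_bigr => q jq; rewrite (ex q jq i k Kk).
Qed.

(* Sub-states [< m] are exact at every node from [settle_time m] on: sub-state
   [m] is then exact at its source [D] steps later, and [N - 1] further
   intervals spread this to every node. *)
Fixpoint settle_time (t : nat -> nat) (D m : nat) : nat :=
  if m is m'.+1 then t (settle_time t D m' + D + N.-1)%N else 0%N.

Lemma exact_below_settle (t : nat -> nat) :
  (forall q, (t q < t q.+1)%N) ->
  (forall q, strongly_connected (union_rel E (t q) (t q.+1).-1)) ->
  forall m, exact_below m (settle_time t (\max_(j < N) d j) m).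
Proof.
move=> t_incr t_conn; set D := \max_(j < N) d j.
elim=> [|m IH] q //= qm i k; set K := settle_time t D m; set K2 := (K + D)%N.
have KK2 : (K <= t (K2 + N.-1))%N.
  by apply: leq_trans (incr_geq_id t_incr _); rewrite -addnA leq_addr.
case: (ltnP q m) => [lt_qm | le_mq] Kk; first by apply: IH => //; apply: leq_trans KK2 Kk.
have qm_eq : val q = m by apply/eqP; rewrite eqn_leq le_mq andbT -ltnS.
have exq : exact_below q K2.
  by rewrite qm_eq; apply: exact_below_monotone IH; apply: leq_addr.
have src_ex k' : (K2 <= k')%N -> zh q q k' = zsub q k'.
  move=> K2k; apply: (source_exact (K := K)); first by rewrite qm_eq.
  by apply: leq_trans K2k; rewrite leq_add2l /D (leq_bigmax q).
apply: (informed_exact exq src_ex).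
by apply: (informed_all q t_incr t_conn (incr_geq_id t_incr K2) i).
Qed.

Lemma estimate_exact (t : nat -> nat) :
  (forall q, (t q < t q.+1)%N) ->
  (forall q, strongly_connected (union_rel E (t q) (t q.+1).-1)) ->
  forall k (i : 'I_N), (settle_time t (\max_(j < N) d j) N <= k)%N ->
  T *m (\mxcol_(j < N) zh i j k) = A ^+ k *m x0.
Proof.
move=> t_incr t_conn k i Kk; rewrite -T_zstate zstate_mxcol; congr (T *m _).
by apply: eq_mxcol => j; apply: (exact_below_settle t_incr t_conn (ltn_ord j)).
Qed.

End Run.

Theorem proposition1 (R : realFieldType) (N : nat) (d r : 'I_N -> nat)
    (A : 'M[R]_(\sum_(j < N) d j))
    (Cs : forall i : 'I_N, 'M[R]_(r i, \sum_(j < N) d j))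
    (T : 'M[R]_(\sum_(j < N) d j))
    (Ab : forall j q : 'I_N, 'M[R]_(d j, d q))
    (Cb : forall i q : 'I_N, 'M[R]_(r i, d q))
    (E : nat -> rel 'I_N) (t : nat -> nat) :
  observable A (\mxcol_(i < N) Cs i) ->
  T \in unitmx ->
  invmx T *m A *m T = \mxblock_(j < N, q < N) Ab j q ->
  (forall j q : 'I_N, (j < q)%N -> Ab j q = 0) ->
  (forall i : 'I_N, Cs i *m T = \mxrow_(q < N) Cb i q) ->
  (forall i q : 'I_N, (i < q)%N -> Cb i q = 0) ->
  (forall j : 'I_N, observable (Ab j j) (Cb j j)) ->
  graph_conditions E t ->
  exists (L : forall j : 'I_N, 'M[R]_(d j, r j)) (K : nat),
    forall (x0 : 'cV[R]_(\sum_(j < N) d j))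
           (zh : forall i j : 'I_N, nat -> 'cV[R]_(d j))
           (tau : 'I_N -> 'I_N -> nat -> option nat),
      run Ab Cb Cs A L E x0 zh tau ->
      forall (k : nat) (i : 'I_N), (K <= k)%N ->
        T *m (\mxcol_(j < N) zh i j k) = A ^+ k *m x0.
Proof.
move=> _ T_unit A_block Ab_lower Cs_block Cb_lower obs_diag [_ t_incr _ _ t_conn].
have gain j : exists L : 'M[R]_(d j, r j), (Ab j j - L *m Cb j j) ^+ d j == 0.
  by have [L nilL] := deadbeat_gain (obs_diag j); exists L; rewrite nilL.
exists (fun j => xchoose (gain j)), (settle_time N t (\max_(j < N) d j) N).
move=> x0 zh tau run_alg k i Kk.
apply: (estimate_exact run_alg T_unit A_block Ab_lower Cs_block Cb_lower _ t_incr t_conn i Kk).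
by move=> j; apply/eqP; apply: xchooseP (gain j).
Qed.
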